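(* Let $(L,d)$ be a metric locale without isolated points. If $L$ is extremally disconnected, then $L$ is Boolean (i.e. $a\vee a^*=1$ for every $a\in L$).
   Context: A frame (locale) $L$ is a complete lattice in which finite meets distribute over arbitrary joins; $a^*$ denotes the pseudocomplement of $a$ (largest $x$ with $x\wedge a=0$). $L$ is extremally disconnected if $a^*\vee a^{**}=1$ for all $a\in L$. A diameter on $L$ is a map $d\colon L\to[0,+\infty]$ with (D1) $d(0)=0$; (D2) $a\le b\Rightarrow d(a)\le d(b)$; (D3) $a\wedge b\neq 0\Rightarrow d(a\vee b)\le d(a)+d(b)$; (D4) for every $\varepsilon>0$, $\bigvee\{a\in L\mid d(a)<\varepsilon\}=1$. Write $b\lhd_\varepsilon a$ if for every $c\in L$ with $d(c)<\varepsilon$, $c\wedge b\ne0$ implies $c\le a$. The diameter is admissible if $a=\bigvee\{b\in L\mid b\lhd_\varepsilon a \text{ for some }\varepsilon>0\}$ for all $a\in L$; a metric locale is a pair $(L,d)$ with $d$ an admissible diameter. A sublocale of $L$ is a subset closed under arbitrary meets and such that $a\to s$ lies in it whenever $s$ does; the open sublocale of $a$ is $\mathfrak{o}(a)=\{a\to b\mid b\in L\}$. A point of $L$ is $p\ne1$ such that $a\wedge b\le p$ implies $a\le p$ or $b\le p$; it is isolated if the sublocale $\{1,p\}$ equals $\mathfrak{o}(a)$ for some $a\in L$. *)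

From Stdlib Require Import Reals.
From Coquelicot Require Import Rbar.
Set Implicit Arguments.
Open Scope R_scope.

Record Frame := {
  car :> Type;
  le : car -> car -> Prop;
  le_refl : forall a, le a a;
  le_trans : forall a b c, le a b -> le b c -> le a c;
  le_antisym : forall a b, le a b -> le b a -> a = b;
  join : (car -> Prop) -> car;
  join_ub : forall (S : car -> Prop) x, S x -> le x (join S);
  join_least : forall (S : car -> Prop) y, (forall x, S x -> le x y) -> le (join S) y;
  meet : car -> car -> car;
  meet_lbl : forall a b, le (meet a b) a;
  meet_lbr : forall a b, le (meet a b) b;
  meet_glb : forall a b c, le c a -> le c b -> le c (meet a b);
  meet_join_distr : forall a (S : car -> Prop),
    meet a (join S) = join (fun y => exists x, S x /\ y = meet a x)
}.

Section FrameNotions.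
Variable L : Frame.

Definition top : L := join L (fun _ => True).
Definition bot : L := join L (fun _ => False).
Definition join2 (a b : L) : L := join L (fun x => x = a \/ x = b).

Definition himp (a b : L) : L := join L (fun x => le L (meet L x a) b).

Definition pcompl (a : L) : L := join L (fun x => meet L x a = bot).

Definition extremally_disconnected : Prop :=
  forall a : L, join2 (pcompl a) (pcompl (pcompl a)) = top.

Definition boolean : Prop := forall a : L, join2 a (pcompl a) = top.

Definition diameter (d : L -> Rbar) : Prop :=
  (forall a, Rbar_le (Finite 0) (d a)) /\
  d bot = Finite 0 /\
  (forall a b, le L a b -> Rbar_le (d a) (d b)) /\
  (forall a b, meet L a b <> bot ->
       Rbar_le (d (join2 a b)) (Rbar_plus (d a) (d b))) /\
  (forall eps : R, 0 < eps ->
       join L (fun a => Rbar_lt (d a) (Finite eps)) = top).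

Definition well_inside (d : L -> Rbar) (eps : R) (b a : L) : Prop :=
  forall c : L, Rbar_lt (d c) (Finite eps) -> meet L c b <> bot -> le L c a.

Definition admissible (d : L -> Rbar) : Prop :=
  forall a : L, a = join L (fun b => exists eps, 0 < eps /\ well_inside d eps b a).

Definition metric_diameter (d : L -> Rbar) : Prop := diameter d /\ admissible d.

Definition open_sublocale (a : L) : L -> Prop := fun x => exists b, x = himp a b.

Definition is_point (p : L) : Prop :=
  p <> top /\ forall a b, le L (meet L a b) p -> le L a p \/ le L b p.

Definition isolated_point (p : L) : Prop :=
  is_point p /\
  exists a : L, forall x : L, (x = top \/ x = p) <-> open_sublocale a x.

End FrameNotions.

(* A metric locale without isolated points has no atoms (for an atom x, x* would be an
   isolated point), and admissibility then splits every nonzero element into two disjoint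
   nonzero parts.  Let e be dense, and call x a core piece if x <> 0 lies below the
   lam-core of e (the join of all b <|_lam e) and has diameter < lam/2.  Admissibility and
   density show that every z not below e contains a member of any maximal pairwise
   disjoint family M of core pieces.  Splitting each x in M into p_x and q_x and putting
   E = \/ p_x, neither E* nor E** contains a member of M, so both lie below e, and
   extremal disconnectedness gives 1 = E* \/ E** <= e.  Since a \/ a* is always dense,
   L is Boolean. *)

From Stdlib Require Import Reals Lra Classical ClassicalEpsilon.
From Coquelicot Require Import Rbar.
From mathcomp Require classical_sets.

Section FrameTheory.
Variable L : Frame.

Local Notation "x ⊑ y" := (le L x y) (at level 70).
Local Notation "x ⊓ y" := (meet L x y) (at level 40, left associativity).
Local Notation "⊥" := (bot L).
Local Notation "⊤" := (top L).

Lemma bot_le x : ⊥ ⊑ x.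
Proof. apply join_least; intros y []. Qed.

Lemma le_top x : x ⊑ ⊤.
Proof. apply join_ub; exact I. Qed.

Lemma le_bot x : x ⊑ ⊥ -> x = ⊥.
Proof. intros H; apply le_antisym; [exact H | apply bot_le]. Qed.

Lemma meetC a b : a ⊓ b = b ⊓ a.
Proof. apply le_antisym; apply meet_glb; auto using meet_lbl, meet_lbr. Qed.

Lemma meet_l a b : a ⊑ b -> a ⊓ b = a.
Proof. intros H; apply le_antisym; [apply meet_lbl | apply meet_glb; auto using le_refl]. Qed.

Lemma meetxx a : a ⊓ a = a.
Proof. apply meet_l, le_refl. Qed.

Lemma leI2 a b c e : a ⊑ b -> c ⊑ e -> a ⊓ c ⊑ b ⊓ e.
Proof.
  intros Hab Hce; apply meet_glb.
  - apply le_trans with a; [apply meet_lbl | exact Hab].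
  - apply le_trans with c; [apply meet_lbr | exact Hce].
Qed.

Lemma meet_eq_bot_le a b c e : a ⊑ b -> c ⊑ e -> b ⊓ e = ⊥ -> a ⊓ c = ⊥.
Proof. intros Hab Hce Hbe; apply le_bot; rewrite <- Hbe; apply leI2; assumption. Qed.

Lemma meet_neq_bot_le a b c e : a ⊑ b -> c ⊑ e -> a ⊓ c <> ⊥ -> b ⊓ e <> ⊥.
Proof. intros Hab Hce Hac Hbe; apply Hac; eapply meet_eq_bot_le; eassumption. Qed.

Lemma join_neq_bot (S : L -> Prop) : join L S <> ⊥ -> exists x, S x /\ x <> ⊥.
Proof.
  intros HS; apply NNPP; intros Hno; apply HS, le_bot, join_least.
  intros x Sx; destruct (classic (x = ⊥)) as [-> | Hx].
  - apply le_refl.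
  - exfalso; apply Hno; eauto.
Qed.

Lemma meet_join_neq_bot a (S : L -> Prop) :
  a ⊓ join L S <> ⊥ -> exists x, S x /\ a ⊓ x <> ⊥.
Proof.
  rewrite meet_join_distr; intros H.
  destruct (join_neq_bot _ H) as [y [[x [Sx ->]] Hy]]; eauto.
Qed.

Lemma join_meet_eq_bot (S T : L -> Prop) :
  (forall p q, S p -> T q -> p ⊓ q = ⊥) -> join L S ⊓ join L T = ⊥.
Proof.
  intros HST; apply le_bot; rewrite meetC, meet_join_distr; apply join_least.
  intros y [q [Tq ->]]; rewrite meetC, meet_join_distr; apply join_least.
  intros y [p [Sp ->]]; rewrite HST by assumption; apply le_refl.
Qed.

Lemma le_of_cover (S : L -> Prop) x z :
  join L S = ⊤ -> (forall c, S c -> x ⊓ c ⊑ z) -> x ⊑ z.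
Proof.
  intros HS Hc; rewrite <- (meet_l x ⊤ (le_top x)), <- HS, meet_join_distr.
  apply join_least; intros y [c [Sc ->]]; auto.
Qed.

Lemma pcompl_meet x : pcompl L x ⊓ x = ⊥.
Proof.
  apply le_bot; unfold pcompl; rewrite meetC, meet_join_distr; apply join_least.
  intros z [w [Hw ->]]; rewrite meetC, Hw; apply le_refl.
Qed.

Lemma le_pcompl x y : y ⊑ pcompl L x <-> y ⊓ x = ⊥.
Proof.
  split; intros H.
  - eapply meet_eq_bot_le; [exact H | apply le_refl | apply pcompl_meet].
  - apply join_ub; exact H.
Qed.

Lemma join2_pcompl_dense a c : c ⊓ join2 L a (pcompl L a) = ⊥ -> c = ⊥.
Proof.
  intros Hc.
  assert (Hca : c ⊑ pcompl L a).
  { apply le_pcompl; eapply meet_eq_bot_le; [apply le_refl | | exact Hc].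
    apply join_ub; left; reflexivity. }
  rewrite <- Hc; symmetry; apply meet_l.
  apply le_trans with (pcompl L a); [exact Hca | apply join_ub; right; reflexivity].
Qed.

Lemma pcompl_le_of_meeting_family (M : L -> Prop) a e :
  (forall z, ~ z ⊑ e -> exists x, M x /\ x ⊑ z) ->
  (forall x, M x -> x ⊓ a <> ⊥) -> pcompl L a ⊑ e.
Proof.
  intros Hbelow Hmeet; apply NNPP; intros Hae.
  destruct (Hbelow _ Hae) as [x [Mx Hx]].
  apply (Hmeet x Mx), le_pcompl, Hx.
Qed.

Definition pairwise_disjoint (M : L -> Prop) : Prop :=
  forall x y, M x -> M y -> x <> y -> x ⊓ y = ⊥.

Lemma eq_top_of_split_family (M : L -> Prop) (p q : L -> L) e :
  extremally_disconnected L -> pairwise_disjoint M ->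
  (forall x, M x -> p x ⊑ x /\ q x ⊑ x /\ p x <> ⊥ /\ q x <> ⊥ /\ p x ⊓ q x = ⊥) ->
  (forall z, ~ z ⊑ e -> exists x, M x /\ x ⊑ z) ->
  e = ⊤.
Proof.
  intros Hed Mdisj Hpq Mbelow.
  set (E := join L (fun y => exists x, M x /\ y = p x)).
  set (O := join L (fun y => exists x, M x /\ y = q x)).
  assert (HEO : E ⊓ O = ⊥).
  { apply join_meet_eq_bot; intros y y' [x [Mx ->]] [x' [Mx' ->]].
    destruct (classic (x = x')) as [<- | Hxx']; [apply (Hpq x Mx) |].
    eapply meet_eq_bot_le; [apply (Hpq x Mx) | apply (Hpq x' Mx') | apply Mdisj; assumption]. }
  apply le_antisym; [apply le_top |].
  rewrite <- (Hed E); apply join_least; intros z [-> | ->];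
    apply (pcompl_le_of_meeting_family M _ _ Mbelow); intros x Mx.
  - apply meet_neq_bot_le with (p x) (p x); [apply (Hpq x Mx) | apply join_ub; eauto |].
    rewrite meetxx; apply (Hpq x Mx).
  - apply meet_neq_bot_le with (q x) (q x); [apply (Hpq x Mx) | |].
    + apply le_trans with O; [apply join_ub; eauto |].
      apply le_pcompl; rewrite meetC; exact HEO.
    + rewrite meetxx; apply (Hpq x Mx).
Qed.

Lemma himp_top a b : a ⊑ b -> himp L a b = ⊤.
Proof.
  intros Hab; apply le_antisym; [apply le_top |].
  apply join_ub; apply le_trans with a; [apply meet_lbr | exact Hab].
Qed.

Lemma himp_pcompl a b : a ⊓ b = ⊥ -> himp L a b = pcompl L a.
Proof.
  intros Hab; apply le_antisym; apply join_least; intros y Hy; apply join_ub.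
  - apply le_bot; rewrite <- Hab; apply meet_glb; [apply meet_lbr | exact Hy].
  - rewrite Hy; apply bot_le.
Qed.

Section Atom.
Variable x : L.
Hypothesis x_neq_bot : x <> ⊥.
Hypothesis x_atom : forall y, y ⊑ x -> y = ⊥ \/ y = x.

Lemma atom_le_of_meet_neq_bot a : x ⊓ a <> ⊥ -> x ⊑ a.
Proof.
  intros Hxa; destruct (x_atom (x ⊓ a) (meet_lbl L x a)) as [Hbot | Hx].
  - contradiction.
  - rewrite <- Hx; apply meet_lbr.
Qed.

Lemma pcompl_atom_point : is_point L (pcompl L x).
Proof.
  split.
  - intros Htop; apply x_neq_bot; rewrite <- (meetxx x); apply le_pcompl.
    rewrite Htop; apply le_top.
  - intros a b Hab.
    destruct (classic (a ⊑ pcompl L x)) as [Ha | Ha]; [left; exact Ha |].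
    destruct (classic (b ⊑ pcompl L x)) as [Hb | Hb]; [right; exact Hb |].
    exfalso; apply x_neq_bot; rewrite <- (meetxx x); apply le_pcompl.
    apply le_trans with (a ⊓ b); [| exact Hab].
    apply meet_glb; apply atom_le_of_meet_neq_bot; rewrite meetC; intros H.
    + apply Ha, le_pcompl, H.
    + apply Hb, le_pcompl, H.
Qed.

Lemma pcompl_atom_isolated : isolated_point L (pcompl L x).
Proof.
  split; [exact pcompl_atom_point |].
  exists x; intros z; split.
  - intros [-> | ->].
    + exists x; symmetry; apply himp_top, le_refl.
    + exists ⊥; symmetry; apply himp_pcompl, le_bot, meet_lbr.
  - intros [b ->].
    destruct (classic (x ⊓ b = ⊥)) as [Hxb | Hxb].
    + right; apply himp_pcompl, Hxb.
    + left; apply himp_top, atom_le_of_meet_neq_bot, Hxb.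
Qed.

End Atom.

Lemma exists_proper_part (Hnoiso : forall p : L, ~ isolated_point L p) x :
  x <> ⊥ -> exists y, y ⊑ x /\ y <> ⊥ /\ y <> x.
Proof.
  intros Hx; apply NNPP; intros Hno.
  apply (Hnoiso (pcompl L x)), pcompl_atom_isolated; [exact Hx |].
  intros y Hy; destruct (classic (y = ⊥)) as [Hb | Hb]; [left; exact Hb |].
  destruct (classic (y = x)) as [He | He]; [right; exact He |].
  exfalso; apply Hno; eauto.
Qed.

Lemma maximal_disjoint_family (P : L -> Prop) :
  exists M, (forall x, M x -> P x) /\ pairwise_disjoint M /\
    forall y, P y -> y <> ⊥ -> exists x, M x /\ y ⊓ x <> ⊥.
Proof.
  set (Q := fun M => (forall x, M x -> P x) /\ pairwise_disjoint M).
  destruct (@classical_sets.Zorn_bigcup L Q) as [M [[MP Mdisj] Mmax]].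
  { intros F FQ Ftot; split.
    - intros x [X FX Xx]; exact (proj1 (FQ X FX) x Xx).
    - intros x y [X FX Xx] [Y FY Yy] Hxy.
      destruct (Ftot X Y FX FY) as [XY | YX].
      + exact (proj2 (FQ Y FY) x y (XY x Xx) Yy Hxy).
      + exact (proj2 (FQ X FX) x y Xx (YX y Yy) Hxy). }
  exists M; split; [exact MP | split; [exact Mdisj |]].
  intros y Py Hy; apply NNPP; intros Hno.
  assert (HyM : ~ M y) by (intros My; apply Hno; exists y; rewrite meetxx; auto).
  apply (Mmax (fun z => M z \/ z = y)); [split | split].
  - intros z Mz; left; exact Mz.
  - intros Hsub; exact (HyM (Hsub y (or_intror eq_refl))).
  - intros z [Mz | ->]; auto.
  - intros u v [Mu | ->] [Mv | ->] Huv; auto.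
    + rewrite meetC; apply NNPP; intros H; apply Hno; eauto.
    + apply NNPP; intros H; apply Hno; eauto.
    + contradiction.
Qed.

Section Diameter.
Variable d : L -> Rbar.
Hypothesis d_diameter : diameter L d.

Lemma diam_le_lt x c eps : x ⊑ c -> Rbar_lt (d c) eps -> Rbar_lt (d x) eps.
Proof.
  destruct d_diameter as (_ & _ & Hmono & _).
  intros Hxc Hc; eapply Rbar_le_lt_trans; [apply Hmono, Hxc | exact Hc].
Qed.

Lemma diam_join2_lt c c' eps :
  c ⊓ c' <> ⊥ -> Rbar_lt (d c) (Finite (eps / 2)) -> Rbar_lt (d c') (Finite (eps / 2)) ->
  Rbar_lt (d (join2 L c c')) (Finite eps).
Proof.
  destruct d_diameter as (Hnonneg & _ & _ & Htri & _).
  intros Hcc' Hc Hc'; eapply Rbar_le_lt_trans; [apply Htri, Hcc' |].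
  generalize (Hnonneg c) (Hnonneg c'); revert Hc Hc'.
  destruct (d c), (d c'); simpl; intros; try contradiction; lra.
Qed.

Lemma le_of_small_meets x z eps :
  0 < eps -> (forall c, Rbar_lt (d c) (Finite eps) -> x ⊓ c ⊑ z) -> x ⊑ z.
Proof.
  destruct d_diameter as (_ & _ & _ & _ & Hcover).
  intros Heps; apply le_of_cover, Hcover, Heps.
Qed.

Lemma exists_small_meet x eps :
  0 < eps -> x <> ⊥ -> exists c, Rbar_lt (d c) (Finite eps) /\ x ⊓ c <> ⊥.
Proof.
  destruct d_diameter as (_ & _ & _ & _ & Hcover).
  intros Heps Hx; apply meet_join_neq_bot; rewrite Hcover by exact Heps.
  rewrite meet_l by apply le_top; exact Hx.
Qed.

Lemma well_inside_le eps b a : 0 < eps -> well_inside L d eps b a -> b ⊑ a.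
Proof.
  intros Heps Hba; apply (le_of_small_meets b a eps Heps); intros c Hc.
  destruct (classic (c ⊓ b = ⊥)) as [Hcb | Hcb].
  - rewrite meetC, Hcb; apply bot_le.
  - apply le_trans with c; [apply meet_lbr | exact (Hba c Hc Hcb)].
Qed.

Definition core (e : L) (eps : R) : L := join L (fun b => well_inside L d eps b e).

Lemma core_antimono e eps eps' : eps' <= eps -> core e eps ⊑ core e eps'.
Proof.
  intros Heps; apply join_least; intros b Hb; apply join_ub.
  intros c Hc; apply Hb; eapply Rbar_lt_le_trans; [exact Hc | exact Heps].
Qed.

Lemma small_meeting_core_le e eps c :
  Rbar_lt (d c) (Finite eps) -> c ⊓ core e eps <> ⊥ -> c ⊑ e.
Proof.
  intros Hc Hcore; destruct (meet_join_neq_bot _ _ Hcore) as [b [Hb Hcb]].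
  exact (Hb c Hc Hcb).
Qed.

(* [c] is itself well inside [e] at scale [lam/2]: together with any [c'] of diameter
   < lam/2 meeting it, it forms a set of diameter < lam that meets [core e lam]. *)
Lemma small_meeting_core_le_core_half e lam c :
  Rbar_lt (d c) (Finite (lam / 2)) -> c ⊓ core e lam <> ⊥ -> c ⊑ core e (lam / 2).
Proof.
  intros Hc Hcore; apply join_ub; intros c' Hc' Hc'c.
  apply le_trans with (join2 L c c'); [apply join_ub; right; reflexivity |].
  apply small_meeting_core_le with lam.
  - apply diam_join2_lt; [rewrite meetC | |]; assumption.
  - apply meet_neq_bot_le with c (core e lam); [| apply le_refl | exact Hcore].
    apply join_ub; left; reflexivity.
Qed.

Hypothesis d_admissible : admissible L d.

Lemma meets_core y e : y ⊓ e <> ⊥ -> exists lam, 0 < lam /\ y ⊓ core e lam <> ⊥.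
Proof.
  rewrite (d_admissible e) at 1; intros Hye.
  destruct (meet_join_neq_bot _ _ Hye) as [b [[eps [Heps Hb]] Hyb]].
  exists eps; split; [exact Heps |].
  eapply meet_neq_bot_le; [apply le_refl | apply join_ub, Hb | exact Hyb].
Qed.

Hypothesis no_isolated : forall p : L, ~ isolated_point L p.

Lemma nonbot_split x :
  x <> ⊥ -> exists p q, p ⊑ x /\ q ⊑ x /\ p <> ⊥ /\ q <> ⊥ /\ p ⊓ q = ⊥.
Proof.
  intros Hx; destruct (exists_proper_part no_isolated x Hx) as [y [Hyx [Hy Hyx']]].
  rewrite (d_admissible y) in Hy.
  destruct (join_neq_bot _ Hy) as [b [[eps [Heps Hby]] Hb]].
  exists b, (x ⊓ pcompl L b); repeat split.
  - apply le_trans with y; [eapply well_inside_le |]; eassumption.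
  - apply meet_lbl.
  - exact Hb.
  - intros Hq; apply Hyx', le_antisym; [exact Hyx |].
    apply (le_of_small_meets x y eps Heps); intros c Hc.
    destruct (classic (c ⊓ b = ⊥)) as [Hcb | Hcb].
    + apply le_trans with ⊥; [| apply bot_le].
      rewrite <- Hq; apply leI2; [apply le_refl | apply le_pcompl, Hcb].
    + apply le_trans with c; [apply meet_lbr | exact (Hby c Hc Hcb)].
  - eapply meet_eq_bot_le; [apply le_refl | apply meet_lbr |].
    rewrite meetC; apply pcompl_meet.
Qed.

Lemma nonbot_split_fun : exists p q : L -> L, forall x, x <> ⊥ ->
  p x ⊑ x /\ q x ⊑ x /\ p x <> ⊥ /\ q x <> ⊥ /\ p x ⊓ q x = ⊥.
Proof.
  destruct (choice (fun x (pq : L * L) => x <> ⊥ -> fst pq ⊑ x /\ snd pq ⊑ x /\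
                      fst pq <> ⊥ /\ snd pq <> ⊥ /\ fst pq ⊓ snd pq = ⊥)) as [f Hf].
  - intros x; destruct (classic (x = ⊥)) as [Hx | Hx].
    + exists (x, x); contradiction.
    + destruct (nonbot_split x Hx) as [p [q Hpq]]; exists (p, q); exact (fun _ => Hpq).
  - exists (fun x => fst (f x)), (fun x => snd (f x)); exact Hf.
Qed.

Section DenseElement.
Variable e : L.
Hypothesis e_dense : forall c, c ⊓ e = ⊥ -> c = ⊥.

Lemma dense_le_of_meet_pcompl_core b eps :
  0 < eps -> b ⊓ e ⊓ pcompl L (core e eps) = ⊥ -> b ⊑ e.
Proof.
  intros Heps Hb; apply (le_of_small_meets b e eps Heps); intros c Hc.
  destruct (classic (c ⊓ core e eps = ⊥)) as [Hcore | Hcore].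
  - assert (Hbc : b ⊓ c = ⊥).
    { apply e_dense, le_bot; rewrite <- Hb; apply meet_glb.
      + apply leI2; [apply meet_lbl | apply le_refl].
      + apply le_trans with c; [| apply le_pcompl, Hcore].
        apply le_trans with (b ⊓ c); [apply meet_lbl | apply meet_lbr]. }
    rewrite Hbc; apply bot_le.
  - apply le_trans with c; [apply meet_lbr | exact (small_meeting_core_le e eps c Hc Hcore)].
Qed.

Definition core_piece (x : L) : Prop :=
  x <> ⊥ /\ exists lam, 0 < lam /\ x ⊑ core e lam /\ Rbar_lt (d x) (Finite (lam / 2)).

Lemma diam_lt_of_meeting_outside_core x x' eta :
  core_piece x -> x' ⊓ x <> ⊥ -> x' ⊓ core e eta = ⊥ -> Rbar_lt (d x') (Finite eta) ->
  Rbar_lt (d x) (Finite eta).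
Proof.
  intros [_ [lam [Hlam [Hx Hdx]]]] Hx'x Hout Hdx'.
  destruct (Rle_or_lt eta (lam / 2)) as [Hle | Hlt].
  - exfalso; apply Hx'x.
    assert (Hhalf : x' ⊑ core e (lam / 2)).
    { apply small_meeting_core_le_core_half.
      - eapply Rbar_lt_le_trans; [exact Hdx' | exact Hle].
      - eapply meet_neq_bot_le; [apply le_refl | exact Hx | exact Hx'x]. }
    assert (Hx'bot : x' = ⊥).
    { rewrite <- Hout; symmetry; apply meet_l.
      apply le_trans with (core e (lam / 2)); [exact Hhalf | apply core_antimono, Hle]. }
    rewrite Hx'bot; apply le_bot, meet_lbl.
  - eapply Rbar_lt_le_trans; [exact Hdx | simpl; lra].
Qed.

Lemma exists_core_piece_inside z :
  ~ z ⊑ e -> exists b eta x', well_inside L d eta b z /\ core_piece x' /\ x' ⊑ b /\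
    x' ⊓ core e eta = ⊥ /\ Rbar_lt (d x') (Finite eta).
Proof.
  intros Hz.
  assert (Hb : exists b eta, 0 < eta /\ well_inside L d eta b z /\ ~ b ⊑ e).
  { apply NNPP; intros Hno; apply Hz; rewrite (d_admissible z); apply join_least.
    intros b [eta [Heta Hb]]; apply NNPP; intros Hbe; apply Hno; eauto. }
  destruct Hb as [b [eta [Heta [Hbz Hbe]]]].
  set (y := b ⊓ e ⊓ pcompl L (core e eta)).
  assert (Hy : y <> ⊥) by (intros Hy; apply Hbe; eapply dense_le_of_meet_pcompl_core; eauto).
  assert (Hye : y ⊑ e) by (apply le_trans with (b ⊓ e); [apply meet_lbl | apply meet_lbr]).
  destruct (meets_core y e) as [lam [Hlam Hylam]]; [rewrite meet_l; assumption |].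
  assert (Hmu : 0 < Rmin (lam / 2) eta) by (apply Rmin_glb_lt; lra).
  destruct (exists_small_meet _ _ Hmu Hylam) as [c [Hc Hc0]].
  set (x' := y ⊓ core e lam ⊓ c).
  assert (Hx'y : x' ⊑ y) by (apply le_trans with (y ⊓ core e lam); apply meet_lbl).
  assert (Hdx' : Rbar_lt (d x') (Finite (Rmin (lam / 2) eta)))
    by (apply diam_le_lt with c; [apply meet_lbr | exact Hc]).
  exists b, eta, x'; repeat split.
  - exact Hbz.
  - exact Hc0.
  - exists lam; repeat split; [exact Hlam | |].
    + apply le_trans with (y ⊓ core e lam); [apply meet_lbl | apply meet_lbr].
    + eapply Rbar_lt_le_trans; [exact Hdx' | apply Rmin_l].
  - apply le_trans with y; [exact Hx'y |].
    apply le_trans with (b ⊓ e); apply meet_lbl.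
  - eapply meet_eq_bot_le; [| apply le_refl | apply pcompl_meet].
    apply le_trans with y; [exact Hx'y | apply meet_lbr].
  - eapply Rbar_lt_le_trans; [exact Hdx' | apply Rmin_r].
Qed.

Lemma core_pieces_below (M : L -> Prop) :
  (forall x, M x -> core_piece x) ->
  (forall y, core_piece y -> exists x, M x /\ y ⊓ x <> ⊥) ->
  forall z, ~ z ⊑ e -> exists x, M x /\ x ⊑ z.
Proof.
  intros MP Mmeets z Hz.
  destruct (exists_core_piece_inside z Hz)
    as [b [eta [x' [Hbz [Hx' [Hx'b [Hout Hdx']]]]]]].
  destruct (Mmeets x' Hx') as [x [Mx Hx'x]].
  exists x; split; [exact Mx |].
  apply Hbz; [exact (diam_lt_of_meeting_outside_core x x' eta (MP x Mx) Hx'x Hout Hdx') |].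
  eapply meet_neq_bot_le; [apply le_refl | exact Hx'b |]; rewrite meetC; exact Hx'x.
Qed.

Hypothesis L_extremally_disconnected : extremally_disconnected L.

Theorem dense_eq_top : e = ⊤.
Proof.
  destruct (maximal_disjoint_family core_piece) as [M [MP [Mdisj Mmeets]]].
  destruct nonbot_split_fun as [p [q Hpq]].
  apply (eq_top_of_split_family M p q); [assumption | exact Mdisj | |].
  - intros x Mx; exact (Hpq x (proj1 (MP x Mx))).
  - apply (core_pieces_below M MP); intros y Hy; exact (Mmeets y Hy (proj1 Hy)).
Qed.

End DenseElement.
End Diameter.
End FrameTheory.

Theorem corollary5p7 (L : Frame) (d : L -> Rbar)
  (Hd : metric_diameter L d)
  (Hnoiso : forall p : L, ~ isolated_point L p)
  (Hed : extremally_disconnected L) :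
  boolean L.
Proof.
  destruct Hd as [Hdiam Hadm]; intros a.
  apply (dense_eq_top L d Hdiam Hadm Hnoiso); [apply join2_pcompl_dense | exact Hed].
Qed.
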